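(* Let $G$ be a sub-$2$-permutable graph and let $H$ be a $2$-adjustable graph. Then $\chi_i(G\,\square\,H)\le \Delta(G\,\square\,H)+2$.
   Context: All graphs are finite and simple. $K^-_{2n}$ is the complete graph on $2n$ vertices with a perfect matching removed. A homomorphism $f:G\to H$ is a map $V(G)\to V(H)$ with $f(u)f(v)\in E(H)$ whenever $uv\in E(G)$; it is locally injective if for every vertex $v$, $f$ is injective on $N(v)$. A graph $G$ is sub-$2$-permutable if it admits a locally injective homomorphism to $K^-_{\Delta(G)+2}$. An incidence of $G$ is a pair $(v,e)$ with $v\in e\in E(G)$; incidences $(v,e),(u,f)$ are adjacent if $v=u$, or $e=f$, or $vu\in\{e,f\}$; an incidence coloring gives adjacent incidences distinct colors; $\chi_i(G)$ is the least number of colors of an incidence coloring. $S^0_c(v)=\{c(v,uv):uv\in E(G)\}$. An incidence coloring $c$ with palette $P$ is adjustable if there are two distinct colors $x,y\in P$ such that no vertex $v$ has $\{x,y\}\subseteq S^0_c(v)$; $H$ is $2$-adjustable if it admits an adjustable incidence coloring with a palette of size $\Delta(H)+2$. $\Delta$ denotes maximum degree. $G\,\square\,H$ is the Cartesian product: vertex set $V(G)\times V(H)$, $(u,v)\sim(u',v')$ iff ($uu'\in E(G)$, $v=v'$) or ($u=u'$, $vv'\in E(H)$). *)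

From mathcomp Require Import all_boot.
Set Implicit Arguments. Unset Strict Implicit. Unset Printing Implicit Defensive.

(* A finite simple graph: vertex type T : finType, adjacency e : rel T that is
   symmetric and irreflexive (hypotheses stated in the theorem). *)

Definition deg (T : finType) (e : rel T) (v : T) : nat := #|[set u | e v u]|.
Definition maxdeg (T : finType) (e : rel T) : nat := \max_(v : T) deg e v.

Definition boxprod (T U : finType) (eG : rel T) (eH : rel U) : rel (T * U) :=
  fun p q => (eG p.1 q.1 && (p.2 == q.2)) || ((p.1 == q.1) && eH p.2 q.2).

(* K^-_{2n}: vertices 'I_(2n), matching {2k, 2k+1} removed *)
Definition Kminus_adj (n : nat) : rel 'I_(2 * n) :=
  fun i j => (i != j) && (i./2 != j./2).

Definition hom (T : finType) (e : rel T) (m : nat) (eK : rel 'I_m) (f : T -> 'I_m) :=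
  forall u v, e u v -> eK (f u) (f v).

Definition locally_injective (T : finType) (e : rel T) (m : nat) (f : T -> 'I_m) :=
  forall v u w, e v u -> e v w -> f u = f w -> u = w.

(* sub-2-permutable: locally injective homomorphism to K^-_{Delta+2};
   K^-_{Delta+2} exists only when Delta+2 = 2n is even. *)
Definition sub2permutable (T : finType) (e : rel T) : Prop :=
  exists n : nat, 2 * n = maxdeg e + 2 /\
    exists f : T -> 'I_(2 * n), hom e (@Kminus_adj n) f /\ locally_injective e f.

(* Incidences: the pair (v,u) with e v u stands for the incidence (v, vu). *)
Definition same_edge (T : eqType) (a b c d : T) : bool :=
  ((a == c) && (b == d)) || ((a == d) && (b == c)).

Definition inc_adj (T : eqType) (v u w x : T) : bool :=
  [|| v == w, same_edge v u w x, same_edge v w v u | same_edge v w w x].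

Definition inc_coloring (T : finType) (e : rel T) (k : nat)
    (c : {ffun T * T -> 'I_k}) : bool :=
  [forall v : T, forall u : T, forall w : T, forall x : T,
     [&& e v u, e w x, (v, u) != (w, x) & inc_adj v u w x] ==>
       (c (v, u) != c (w, x))].

Definition inc_colorable (T : finType) (e : rel T) (k : nat) : bool :=
  [exists c : {ffun T * T -> 'I_k}, inc_coloring e c].

Lemma inc_colorable_exists (T : finType) (e : rel T) :
  exists k, inc_colorable e k.
Proof.
exists #|{: T * T}|; apply/existsP.
exists [ffun p => enum_rank p].
apply/forallP => v; apply/forallP => u; apply/forallP => w; apply/forallP => x.
apply/implyP => /and4P [_ _ Hne _]; rewrite !ffunE.
apply: contra Hne => /eqP H; apply/eqP; exact: enum_rank_inj H.
Qed.

Definition inc_chrom (T : finType) (e : rel T) : nat :=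
  ex_minn (inc_colorable_exists e).

Definition S0 (T : finType) (e : rel T) (k : nat) (c : {ffun T * T -> 'I_k}) (v : T)
  : {set 'I_k} := [set c (v, u) | u in [set u | e v u]].

Definition adjustable (T : finType) (e : rel T) (k : nat) (c : {ffun T * T -> 'I_k}) :=
  exists x y : 'I_k, x != y /\ forall v : T, ~~ ((x \in S0 e c v) && (y \in S0 e c v)).

Definition two_adjustable (T : finType) (e : rel T) : Prop :=
  exists c : {ffun T * T -> 'I_(maxdeg e + 2)}, inc_coloring e c /\ adjustable e c.

From mathcomp Require Import all_boot zify.
Set Implicit Arguments. Unset Strict Implicit. Unset Printing Implicit Defensive.

(* Let f : G -> K^-_{2n} be locally injective, 2n = Delta(G) + 2, and let c be an
   adjustable incidence colouring of H with Delta(H) + 2 colours, no vertex seeing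
   both x and y.  In G [] H, the incidence ((g,h),(g',h)) of a G-edge gets the colour
   f g', replaced by its partner in the removed matching when y occurs at h; the
   incidence ((g,h),(g,h')) of an H-edge gets c(h,h'), where x and y are recoloured
   partner (f g) and f g, and the Delta(H) other colours of c are moved above 2n.
   Local injectivity of f and properness of c separate incidences of the same kind;
   a G-incidence and an H-incidence whose G-coordinates are adjacent get colours
   in distinct matching pairs because f is a homomorphism; the remaining conflict,
   ((g,h),(g',h)) followed by ((g',h),(g',h')), is resolved by adjustability.  This
   uses 2n + Delta(H) = Delta(G) + Delta(H) + 2 <= Delta(G [] H) + 2 colours. *)

(* The vertex matched with [i] in the perfect matching removed from K^-_{2n}. *)
Definition partner (i : nat) : nat := (~~ odd i) + i./2.*2.

Lemma half_partner i : (partner i)./2 = i./2.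
Proof. by rewrite /partner half_bit_double. Qed.

Lemma odd_partner i : odd (partner i) = ~~ odd i.
Proof. by rewrite /partner oddD odd_double addbF; case: (odd i). Qed.

Lemma partnerK : involutive partner.
Proof.
by move=> i; rewrite {1}/partner odd_partner half_partner negbK odd_double_half.
Qed.

Lemma partner_inj : injective partner.
Proof. exact: inv_inj partnerK. Qed.

Lemma partner_neq i : partner i != i.
Proof. by apply/eqP => E; move: (odd_partner i); rewrite E; case: odd. Qed.

Lemma partner_lt n i : i < 2 * n -> partner i < 2 * n.
Proof. by rewrite mul2n -!ltn_half_double half_partner. Qed.

(* Relabels the palette 'I_m: [x] and [y] become the matched pair [partner a], [a],
   and the m - 2 other colours are sent injectively to [N, N + m - 2). *)
Definition merge_color m (x y : 'I_m) (N a : nat) (z : 'I_m) : nat :=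
  if z == x then partner a else if z == y then a else N + (z - (x < z) - (y < z)).

Lemma merge_color_inj m (x y : 'I_m) n a : x != y -> a < 2 * n ->
  injective (merge_color x y (2 * n) a).
Proof.
move=> neq_xy lt_a z1 z2; have Hp := partner_lt lt_a; have Hpa := partner_neq a.
rewrite /merge_color; case E1: (z1 == x); case E2: (z2 == x); case E3: (z1 == y);
  case E4: (z2 == y); move: E1 E2 E3 E4 Hpa; rewrite -!val_eqE /=;
  case: (ltnP x z1); case: (ltnP x z2); case: (ltnP y z1); case: (ltnP y z2) => /=;
  move: neq_xy; rewrite -val_eqE /= => *; apply/val_inj => /=; lia.
Qed.

Lemma merge_color_lt m (x y : 'I_(m + 2)) n a z : x != y -> a < 2 * n ->
  merge_color x y (2 * n) a z < 2 * n + m.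
Proof.
move=> neq_xy lt_a; have Hp := partner_lt lt_a; rewrite /merge_color.
have := ltn_ord z; have := ltn_ord x; have := ltn_ord y.
case E1: (z == x); case E2: (z == y); move: E1 E2; rewrite -!val_eqE /=;
  case: (ltnP x z); case: (ltnP y z) => /=; move: neq_xy; rewrite -val_eqE /= => *; lia.
Qed.

Lemma half_merge_color m (x y : 'I_m) n a z : a < 2 * n ->
  merge_color x y (2 * n) a z < 2 * n -> (merge_color x y (2 * n) a z)./2 = a./2.
Proof.
rewrite /merge_color; case: eqP => _; first by rewrite half_partner.
by case: eqP => _ //; lia.
Qed.

Lemma inc_coloringP (T : finType) (e : rel T) k (c : {ffun T * T -> 'I_k}) :
  reflect (forall v u w x, e v u -> e w x -> (v, u) != (w, x) -> inc_adj v u w x ->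
             c (v, u) != c (w, x))
          (inc_coloring e c).
Proof.
apply: (iffP forallP) => [col v u w x evu ewx ne adj | col v].
  by move/forallP: (col v) => /(_ u) /forallP /(_ w) /forallP /(_ x) /implyP; apply;
    rewrite evu ewx ne adj.
apply/forallP=> u; apply/forallP=> w; apply/forallP=> x; apply/implyP.
by case/and4P; apply: col.
Qed.

Lemma inc_colorable_of_nat (T : finType) (e : rel T) (k : nat) (col : T -> T -> nat) :
  0 < k -> (forall v u, e v u -> col v u < k) ->
  (forall v u w x, e v u -> e w x -> (v, u) != (w, x) -> inc_adj v u w x ->
     col v u != col w x) ->
  inc_colorable e k.
Proof.
case: k => // k _ col_lt col_proper; apply/existsP.
exists [ffun p => inord (col p.1 p.2)]; apply/inc_coloringP => v u w x evu ewx ne adj.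
rewrite !ffunE; apply: contra (col_proper _ _ _ _ evu ewx ne adj) => /eqP/(congr1 val).
by rewrite /= !inordK ?col_lt // => ->.
Qed.

Lemma inc_chrom_le (T : finType) (e : rel T) k : inc_colorable e k -> inc_chrom e <= k.
Proof. by rewrite /inc_chrom; case: ex_minnP => m _; apply. Qed.

Section BoxProduct.
Variables (T U : finType) (eG : rel T) (eH : rel U).
Hypotheses (irrG : irreflexive eG) (irrH : irreflexive eH).

Lemma boxprod_irr : irreflexive (boxprod eG eH).
Proof. by case=> g h; rewrite /boxprod /= irrG irrH andbF. Qed.

Lemma boxprodP p q : boxprod eG eH p q ->
  (eG p.1 q.1 /\ p.2 = q.2) \/ (p.1 = q.1 /\ eH p.2 q.2 /\ p.2 != q.2).
Proof.
case/orP => /andP [] => [eGpq /eqP | /eqP eq1 eHpq]; first by left.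
by right; do !split=> //; apply: contraTneq eHpq => ->; rewrite irrH.
Qed.

Lemma deg_boxprod g h : deg (boxprod eG eH) (g, h) = deg eG g + deg eH h.
Proof.
pose NG := [set (g', h) | g' in [set g' | eG g g']].
pose NH := [set (g, h') | h' in [set h' | eH h h']].
rewrite /deg; have -> : [set q | boxprod eG eH (g, h) q] = NG :|: NH.
  apply/setP => -[g' h']; rewrite !inE /boxprod /=.
  apply/orP/orP => [[/andP [e /eqP <-] | /andP [/eqP <- e]] | [] /imsetP [z]].
  - by left; rewrite imset_f ?inE.
  - by right; rewrite imset_f ?inE.
  - by rewrite inE => e [-> ->]; left; rewrite e eqxx.
  - by rewrite inE => e [-> ->]; right; rewrite e eqxx.
have disj : [disjoint NG & NH].
  apply/pred0P => q /=; apply/negP => /andP [/imsetP [g' eg' ->] /imsetP [h' _ [E _]]].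
  by move: eg'; rewrite inE E irrG.
rewrite cardsU (disjoint_setI0 disj) cards0 subn0.
by rewrite !card_imset // => a b [].
Qed.

Lemma maxdeg_boxprod (p : T * U) : maxdeg eG + maxdeg eH <= maxdeg (boxprod eG eH).
Proof.
have [g ->] : {g | maxdeg eG = deg eG g} by apply/eq_bigmax/card_gt0P; exists p.1.
have [h ->] : {h | maxdeg eH = deg eH h} by apply/eq_bigmax/card_gt0P; exists p.2.
by rewrite -deg_boxprod; apply: leq_bigmax.
Qed.

End BoxProduct.

Section ProductColoring.
Variables (T U : finType) (eG : rel T) (eH : rel U).
Hypotheses (irrG : irreflexive eG) (irrH : irreflexive eH).
Variables (n : nat) (f : T -> 'I_(2 * n)).
Hypotheses (f_hom : hom eG (@Kminus_adj n) f) (f_li : locally_injective eG f).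
Variables (m : nat) (c : {ffun U * U -> 'I_(m + 2)}) (x y : 'I_(m + 2)).
Hypotheses (c_col : inc_coloring eH c) (neq_xy : x != y).
Hypothesis xy_apart : forall h, ~~ ((x \in S0 eH c h) && (y \in S0 eH c h)).

Definition fiber_color (h : U) (g : T) : nat :=
  if y \in S0 eH c h then partner (f g) else f g.

Definition prod_color (p q : T * U) : nat :=
  if p.2 == q.2 then fiber_color p.2 q.1
  else merge_color x y (2 * n) (f p.1) (c (p.2, q.2)).

Local Notation merge g := (merge_color x y (2 * n) (f g)).

Lemma fiber_color_lt h g : fiber_color h g < 2 * n.
Proof. by rewrite /fiber_color; case: ifP => _; rewrite ?partner_lt. Qed.

Lemma half_fiber_color h g : (fiber_color h g)./2 = (f g)./2.
Proof. by rewrite /fiber_color; case: ifP => _; rewrite ?half_partner. Qed.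

Lemma fiber_color_inj h g g' : fiber_color h g = fiber_color h g' -> f g = f g'.
Proof. by rewrite /fiber_color; case: ifP => _ => [/partner_inj|] /val_inj. Qed.

Lemma fiber_color_neq_merge h g g' z : eG g g' -> fiber_color h g' != merge g z.
Proof.
move=> /f_hom /andP [_ half_neq]; apply: contra half_neq => /eqP E.
by rewrite -(half_fiber_color h g') E half_merge_color // -E fiber_color_lt.
Qed.

Lemma fiber_color_neq_merge_target h h' g : eH h h' ->
  fiber_color h g != merge g (c (h, h')).
Proof.
move=> eHhh'; have c_in : c (h, h') \in S0 eH c h by apply/imsetP; exists h'; rewrite ?inE.
rewrite /fiber_color /merge_color.
(* if c(h,h') = x then y does not occur at h, so the two colours are f g and its partner *)
have [cx | neq_cx] := eqVneq (c (h, h')) x.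
  have /negbTE -> : y \notin S0 eH c h by move: (xy_apart h); rewrite -cx c_in.
  by rewrite eq_sym partner_neq.
have [cy | neq_cy] := eqVneq (c (h, h')) y.
  by rewrite -cy c_in partner_neq.
by rewrite neq_ltn ltn_addr // fiber_color_lt.
Qed.

Local Notation box := (boxprod eG eH).

Lemma c_proper h1 h2 h3 h4 : eH h1 h2 -> eH h3 h4 -> (h1, h2) != (h3, h4) ->
  inc_adj h1 h2 h3 h4 -> c (h1, h2) != c (h3, h4).
Proof. exact/inc_coloringP. Qed.

Lemma prod_color_lt p q : box p q -> prod_color p q < 2 * n + m.
Proof.
rewrite /prod_color; case: ifP => _ _; last exact: merge_color_lt.
by rewrite ltn_addr ?fiber_color_lt.
Qed.

Lemma prod_color_same_source p q r : box p q -> box p r -> q != r ->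
  prod_color p q != prod_color p r.
Proof.
case: p q r => [g h] [g2 h2] [g3 h3] /(boxprodP irrH) [[/= e2 <-] | [/= <- [e2 n2]]]
  /(boxprodP irrH) [[/= e3 <-] | [/= <- [e3 n3]]] ne;
  rewrite /prod_color /= ?eqxx ?(negbTE n2) ?(negbTE n3).
- by apply: contra ne => /eqP/fiber_color_inj/(f_li e2 e3) ->.
- exact: fiber_color_neq_merge.
- by rewrite eq_sym fiber_color_neq_merge.
rewrite (inj_eq (merge_color_inj neq_xy (ltn_ord _))) c_proper ?/inc_adj ?eqxx //.
by apply: contra ne => /eqP [->].
Qed.

Lemma prod_color_consecutive p q r : box p q -> box q r -> prod_color p q != prod_color q r.
Proof.
case: p q r => [g h] [g2 h2] [g3 h3] /(boxprodP irrH) [[/= e2 <-] | [/= <- [e2 n2]]]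
  /(boxprodP irrH) [[/= e3 <-] | [/= <- [e3 n3]]];
  rewrite /prod_color /= ?eqxx ?(negbTE n2) ?(negbTE n3).
- by move/f_hom/andP: e3 => [+ _]; apply: contra => /eqP/fiber_color_inj ->.
- exact: fiber_color_neq_merge_target.
- by rewrite eq_sym fiber_color_neq_merge.
rewrite (inj_eq (merge_color_inj neq_xy (ltn_ord _))) c_proper //.
  by apply: contra n2 => /eqP [->].
by rewrite /inc_adj /same_edge !eqxx !orbT.
Qed.

Lemma prod_color_proper v u w z : box v u -> box w z -> (v, u) != (w, z) ->
  inc_adj v u w z -> prod_color v u != prod_color w z.
Proof.
move=> + + + adj; case/or4P: adj => [/eqP<- | /orP[] | /orP[] | /orP[]].
- by move=> evu evz ne; apply: prod_color_same_source => //; apply: contra ne => /eqP->.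
- by case/andP => /eqP-> /eqP->; rewrite eqxx.
- by case/andP => /eqP-> /eqP-> ezw ewz _; apply: prod_color_consecutive.
- by rewrite eqxx => /eqP-> evu euz _; apply: prod_color_consecutive.
- by case/andP => /eqP<- _; rewrite boxprod_irr.
- by case/andP => /eqP-> /eqP-> _; rewrite boxprod_irr.
- rewrite eqxx andbT => /eqP-> ezu ewz _.
  by rewrite eq_sym; apply: prod_color_consecutive.
Qed.
End ProductColoring.

Theorem mainTheorem12 (T U : finType) (eG : rel T) (eH : rel U)
  (symG : symmetric eG) (irrG : irreflexive eG)
  (symH : symmetric eH) (irrH : irreflexive eH) :
  sub2permutable eG -> two_adjustable eH ->
  inc_chrom (boxprod eG eH) <= maxdeg (boxprod eG eH) + 2.
Proof.
move=> [n [dG [f [f_hom f_li]]]] [c [c_col [x [y [neq_xy xy_apart]]]]].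
apply: inc_chrom_le; apply: (inc_colorable_of_nat (col := prod_color eH f c x y)).
- by rewrite addn2.
- move=> p q /(prod_color_lt f c neq_xy) lt_pq; apply: leq_trans lt_pq _.
  by have := maxdeg_boxprod eH irrG p; lia.
- exact: prod_color_proper.
Qed.
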